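(* In the standing setup, let $S\in\mathfrak{S}$ be positively enabled and $T\in\mathfrak{S}$ negatively enabled, and let $A_S=\mathrm{eff}(\sigma^+_S)$, $B_T=-\mathrm{eff}(\sigma^-_T)$. Then $$\sum_{i\in\mathcal{N}_{(S,\cdot)}}\mathrm{len}(\rho^i_{\mathrm{cap}})\le A_S\cdot n,\qquad \sum_{i\in\mathcal{N}_{(\cdot,T)}}\mathrm{len}(\rho^i_{\mathrm{cap}})\le n\cdot B_T,$$ and moreover $\sum_{i\in\mathcal{N}}\mathrm{len}(\rho^i_{\mathrm{cap}})\le n^2$.
   Context: $\mathbb{N}=\{0,1,2,\dots\}$. A one-counter system (OCS) $\mathcal{O}$ consists of a finite set $Q$ of states, a set $T_{>0}\subseteq Q\times\{-1,0,1\}\times Q$ of non-zero transitions and a set $T_{=0}\subseteq Q\times\{0,1\}\times Q$ of zero tests. A configuration is a pair $(q,c)\in Q\times\mathbb{N}$ (state $q$, counter value $c$). A transition $t=(p,d,q)$ has source $p$, target $q$, effect $d$; it can be fired in $(p,c)$ if either $t\in T_{>0}$ and $c>0$, or $t\in T_{=0}$ and $c=0$, yielding $(q,c+d)$. A path is a sequence $(\gamma_1,t_1)\cdots(\gamma_m,t_m)$ such that, with some $\gamma_{m+1}$, firing $t_i$ in $\gamma_i$ yields $\gamma_{i+1}$ for all $i\le m$; its source is $\gamma_1$, target $\gamma_{m+1}$, length $\mathrm{len}=m$, configurations appearing on it are $\gamma_1,\dots,\gamma_{m+1}$, intermediate ones are $\gamma_2,\dots,\gamma_m$; its projection is $\mathrm{proj}=t_1\cdots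 t_m$ and its effect $\mathrm{eff}$ is the sum of the effects of its transitions. A sequence of transitions is consistent if each transition's target is the next one's source. A cycle is a consistent sequence of non-zero transitions starting and ending in the same state (its base state); positive/negative if its effect is positive/negative; simple if no state is visited twice except the base at start and end. The transition multigraph $G$ has vertices $Q$ and an edge $p\to q$ labelled $d$ for each $(p,d,q)\in T_{>0}$; $\mathfrak{S}$ is the set of its SCCs and $n_S$ the number of states in $S\in\mathfrak{S}$. A cycle is contained in $S$ if all its states lie in $S$; $S$ is positively (negatively) enabled if it contains a positive (negative) cycle. For every positively enabled $S$ a simple positive cycle $\sigma^+_S$ contained in $S$ is fixed, and for every negatively enabled $T$ a simple negative cycle $\sigma^-_T$ contained in $T$. An arc is a path whose source and target have counter value $0$ and whose intermediate configurations have positive counter value. A path is low if all configurations appearing on it have counter value $<5n$, where $n=|Q|$. For $S,T\in\mathfrak{S}$, an arc $\rho$ is $(S,T)$-normal if $\rho=\rho_{\mathrm{pref}}\rho_{\mathrm{up}}\rho_{\mathrm{cap}}\rho_{\mathrm{down}}\rho_{\mathrm{suff}}$ (normal decomposition) with $\rho_{\mathrm{pref}},\rho_{\mathrm{suff}}$ low, $\mathrm{proj}(\rho_{\mathrm{up}})=(\sigma^+_S)^a$, $\mathrm{proj}(\rho_{\mathrm{down}})=(\sigma^-_T)^b$ for some $a,b\in\mathbb{N}$, the source of $\rho_{\mathrm{cap}}$ having the base state of $\sigma^+_S$ and its target the base state of $\sigma^-_T$. Writing $A=\mathrm{eff}(\sigma^+_S)$, $B=-\mathrm{eff}(\sigma^-_T)$,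 such a decomposition is good if: (iii) $aA\le 2\,\mathrm{len}(\rho_{\mathrm{cap}})+2\,\mathrm{lcm}(A,B)$; (iv) $bB\le 2\,\mathrm{len}(\rho_{\mathrm{cap}})+2\,\mathrm{lcm}(A,B)$; (v) no infix of $\mathrm{proj}(\rho_{\mathrm{cap}})$ is a cycle with effect divisible by $\gcd(A,B)$; (vi) the target of $\rho_{\mathrm{up}}$ and the source of $\rho_{\mathrm{down}}$ have counter values $>n$; (vii) all configurations appearing on $\rho_{\mathrm{pref}}$ and $\rho_{\mathrm{suff}}$ together are pairwise distinct. Standing setup: $\alpha,\beta$ are configurations with counter value $0$; $\rho=\rho^1\rho^2\cdots\rho^k$ is a path from $\alpha$ to $\beta$ that has the minimum possible number of appearing configurations with counter value $0$ among all paths from $\alpha$ to $\beta$; each $\rho^i$ is an arc; $\{1,\dots,k\}=\mathcal{L}\sqcup\mathcal{N}$ where for $i\in\mathcal{L}$, $\rho^i$ is a low arc of minimum length among all low arcs with the same source and target, and for $i\in\mathcal{N}$, $\rho^i$ is $(S_i,T_i)$-normal for some $S_i,T_i\in\mathfrak{S}$ with a fixed good normal decomposition $\rho^i=\rho^i_{\mathrm{pref}}\rho^i_{\mathrm{up}}\rho^i_{\mathrm{cap}}\rho^i_{\mathrm{down}}\rho^i_{\mathrm{suff}}$. For $S,T\in\mathfrak{S}$: $\mathcal{N}_{(S,T)}=\{i\in\mathcal{N}: (S_i,T_i)=(S,T)\}$, $\mathcal{N}_{(S,\cdot)}=\{i\in\mathcal{N}:S_i=S\}$, $\mathcal{N}_{(\cdot,T)}=\{i\in\mathcal{N}:T_i=T\}$.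 *)

From mathcomp Require Import all_boot all_order all_algebra.
Set Implicit Arguments. Unset Strict Implicit. Unset Printing Implicit Defensive.
Import GRing.Theory Num.Theory.

Definition trans (Q : finType) := (Q * int * Q)%type.
Definition tsrc (Q : finType) (t : trans Q) : Q := t.1.1.
Definition teff (Q : finType) (t : trans Q) : int := t.1.2.
Definition ttgt (Q : finType) (t : trans Q) : Q := t.2.

Record ocs (Q : finType) := OCS {
  Tpos : pred (trans Q);
  Tzero : pred (trans Q);
  Tpos_eff : forall t, Tpos t -> teff t \in [:: (-1)%R; 0%R; 1%R];
  Tzero_eff : forall t, Tzero t -> teff t \in [:: 0%R; 1%R]
}.

Definition config (Q : finType) := (Q * nat)%type.

(* A path is given by its source configuration γ_1 and its projection t_1 ⋯ t_m;
   the configurations γ_2,…,γ_{m+1} are then determined. *)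
Record opath (Q : finType) := OPath { psrc : config Q; ptr : seq (trans Q) }.

Section OCS.
Variables (Q : finType) (O : ocs Q).

Definition n_states : nat := #|Q|.

Definition firable (t : trans Q) (g : config Q) : bool :=
  (tsrc t == g.1) &&
  ((Tpos O t && (0 < g.2)%N) || (Tzero O t && (g.2 == 0)%N)).
Definition next (t : trans Q) (g : config Q) : config Q :=
  (ttgt t, absz (Posz g.2 + teff t)%R).

Fixpoint valid_from (g : config Q) (ts : seq (trans Q)) : bool :=
  match ts with
  | [::] => true
  | t :: ts' => firable t g && valid_from (next t g) ts'
  end.

Definition pvalid (p : opath Q) : bool := valid_from (psrc p) (ptr p).

Definition pafter (p : opath Q) : seq (config Q) :=
  scanl (fun g t => next t g) (psrc p) (ptr p).
Definition pcfgs (p : opath Q) : seq (config Q) := psrc p :: pafter p.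
Definition pinter (p : opath Q) : seq (config Q) :=
  take (size (pafter p)).-1 (pafter p).
Definition ptgt (p : opath Q) : config Q := last (psrc p) (pafter p).
Definition plen (p : opath Q) : nat := size (ptr p).

Definition seff (s : seq (trans Q)) : int := (\sum_(t <- s) teff t)%R.

Fixpoint consistent (s : seq (trans Q)) : bool :=
  match s with
  | t1 :: ((t2 :: _) as s') => (ttgt t1 == tsrc t2) && consistent s'
  | _ => true
  end.

Definition is_cycle (s : seq (trans Q)) : bool :=
  match s with
  | [::] => false
  | t :: _ => [&& all (Tpos O) s, consistent s & ttgt (last t s) == tsrc t]
  end.
Definition cycle_states (s : seq (trans Q)) : seq Q := map (@tsrc Q) s.
Definition simple_cycle (s : seq (trans Q)) : bool :=
  is_cycle s && uniq (cycle_states s).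
Definition base_state (s : seq (trans Q)) (d : Q) : Q := head d (cycle_states s).

Definition gedge : rel Q :=
  fun p q => has (fun d => Tpos O (p, d, q)) [:: (-1)%R; 0%R; 1%R].
Definition is_scc (S : {set Q}) : Prop :=
  exists q : Q, S = [set p | connect gedge q p && connect gedge p q].

Definition contained (S : {set Q}) (s : seq (trans Q)) : bool :=
  all (fun q => q \in S) (cycle_states s).
Definition pos_enabled (S : {set Q}) : Prop :=
  exists s, [&& is_cycle s, (0 < seff s)%R & contained S s].
Definition neg_enabled (S : {set Q}) : Prop :=
  exists s, [&& is_cycle s, (seff s < 0)%R & contained S s].

Definition is_arc (p : opath Q) : bool :=
  [&& pvalid p, (psrc p).2 == 0%N, (ptgt p).2 == 0%N &
      all (fun g => (0 < g.2)%N) (pinter p)].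
Definition is_low (p : opath Q) : bool :=
  all (fun g => (g.2 < 5 * n_states)%N) (pcfgs p).

Definition chain (ps : seq (opath Q)) : bool :=
  match ps with
  | [::] => true
  | p :: ps' => path (fun p1 p2 => ptgt p1 == psrc p2) p ps'
  end.
Definition decomp (p : opath Q) (ps : seq (opath Q)) : bool :=
  [&& chain ps, psrc (head p ps) == psrc p & ptr p == flatten (map (@ptr Q) ps)].

Definition nzeros (p : opath Q) : nat := count (fun g => g.2 == 0%N) (pcfgs p).

Definition sigma_ok (sigp sigm : {set Q} -> seq (trans Q)) : Prop :=
  (forall S, is_scc S -> pos_enabled S ->
     [&& simple_cycle (sigp S), (0 < seff (sigp S))%R & contained S (sigp S)]) /\
  (forall T, is_scc T -> neg_enabled T ->
     [&& simple_cycle (sigm T), (seff (sigm T) < 0)%R & contained T (sigm T)]).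

Definition Aof (sigp : {set Q} -> seq (trans Q)) (S : {set Q}) : nat :=
  absz (seff (sigp S)).
Definition Bof (sigm : {set Q} -> seq (trans Q)) (T : {set Q}) : nat :=
  absz (- seff (sigm T))%R.

Definition normal_decomp (sigp sigm : {set Q} -> seq (trans Q))
    (S T : {set Q}) (rho pref up cap down suff : opath Q) (a b : nat) : Prop :=
  [/\ is_scc S, is_scc T, pos_enabled S & neg_enabled T] /\
  [/\ is_arc rho & decomp rho [:: pref; up; cap; down; suff]] /\
  [/\ is_low pref, is_low suff,
      ptr up = flatten (nseq a (sigp S)) &
      ptr down = flatten (nseq b (sigm T))] /\
  (forall d, (psrc cap).1 = base_state (sigp S) d) /\
  (forall d, (ptgt cap).1 = base_state (sigm T) d).

Definition good_decomp (sigp sigm : {set Q} -> seq (trans Q))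
    (S T : {set Q}) (pref up cap down suff : opath Q) (a b : nat) : Prop :=
  let A := Aof sigp S in let B := Bof sigm T in
  [/\ (a * A <= 2 * plen cap + 2 * lcmn A B)%N,
      (b * B <= 2 * plen cap + 2 * lcmn A B)%N,
      (forall s, infix s (ptr cap) -> is_cycle s ->
          ~~ (gcdn A B %| absz (seff s))%N),
      (n_states < (ptgt up).2)%N /\ (n_states < (psrc down).2)%N &
      uniq (pcfgs pref ++ pcfgs suff)].

Definition min_low_arc (p : opath Q) : Prop :=
  is_arc p /\ is_low p /\
  forall p', is_arc p' -> is_low p' -> psrc p' = psrc p -> ptgt p' = ptgt p ->
    (plen p <= plen p')%N.

End OCS.

From Pilot Require Import Defs.
From mathcomp Require Import all_boot all_order all_algebra zify.
Set Implicit Arguments. Unset Strict Implicit. Unset Printing Implicit Defensive.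
Import GRing.Theory Num.Theory.

(* Consider the configurations visited by the caps of the normal arcs.  Two of
   them, in arcs i <= j, cannot have the same state and counter values that are
   congruent modulo A (the effect of the cycle pumped up in arc i) or modulo B
   (the effect of the cycle pumped down in arc j).  If i < j, pump the first
   cycle k times in arc i and the second l times in arc j so that both counters
   become equal; jumping from arc i straight into arc j then avoids at least one
   visit of counter value 0, against the minimality of rho.  If i = j, the cap
   would contain a cycle whose effect is divisible by gcd(A, B), which the good
   decomposition excludes.  So the cap configurations of the arcs pumped with a
   fixed cycle inject into Q * Z/A (resp. Q * Z/B), which yields the first two
   bounds, and a variant of the key gives the bound n^2. *)

Lemma take_nth_split (T : Type) (x0 : T) (s : seq T) i j : i < j -> j <= size s ->
  take j s = take i s ++ nth x0 s i :: drop i.+1 (take j s).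
Proof.
move=> hij hj; rewrite -{1}(cat_take_drop i (take j s)) take_takel ?(ltnW hij) //.
by rewrite (drop_nth x0) ?size_takel // nth_take.
Qed.

Lemma modn_add_mul_meet (u v A B : nat) : 0 < A -> 0 < B -> u = v %[mod A] ->
  exists k l, u + k * A = v + l * B.
Proof.
move=> hA hB huv; pose w := u * B * A + v.
have hle : u <= w.
  by rewrite (leq_trans _ (leq_addr _ _)) // -mulnA leq_pmulr // muln_gt0 hB.
have hdvd : A %| w - u by rewrite -eqn_mod_dvd // modnMDl huv.
exists ((w - u) %/ A), (u * A).
by rewrite divnK // subnKC // addnC mulnAC.
Qed.

Lemma dvdn_absz_diff (x y M : nat) (e : int) :
  Posz y = (Posz x + e)%R -> x = y %[mod M] -> M %| `|e|.
Proof.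
move=> he hmod; wlog hxy : x y e he hmod / x <= y.
  move=> hwlog; case: (leqP x y) => [|/ltnW hyx]; first exact: hwlog.
  by rewrite -abszN; apply: (hwlog y x) => //; lia.
have -> : `|e| = y - x by lia.
by rewrite -eqn_mod_dvd // hmod.
Qed.

Lemma sum_succ_leq_injective_keys (N : nat) (P : pred nat) (L : nat -> nat)
    (K : eqType) (key : nat -> nat -> K) (U : seq K) :
  (forall i j p p', i < N -> j < N -> P i -> P j -> p <= L i -> p' <= L j ->
     key i p = key j p' -> i = j /\ p = p') ->
  (forall i p, i < N -> P i -> p <= L i -> key i p \in U) ->
  \sum_(i < N | P i) (L i).+1 <= size U.
Proof.
move=> hinj hU.
pose I := [seq i <- iota 0 N | P i].
pose ips := [seq (i, p) | i <- I, p <- iota 0 (L i).+1].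
have hips ip : ip \in ips -> [/\ ip.1 < N, P ip.1 & ip.2 <= L ip.1].
  case/allpairsPdep=> i [p [hi hp ->]] /=.
  by move: hi hp; rewrite mem_filter !mem_iota /= !add0n ltnS => /andP [-> ->].
have -> : \sum_(i < N | P i) (L i).+1 = size ips.
  rewrite size_allpairs_dep sumnE big_map big_filter.
  under eq_bigr do rewrite size_iota.
  by rewrite -(big_mkord P (fun i => (L i).+1)) /index_iota subn0.
rewrite -(size_map (fun ip => key ip.1 ip.2)); apply: uniq_leq_size.
  rewrite map_inj_in_uniq.
    apply: allpairs_uniq_dep => [|i _|[? ?] [? ?] _ _ [-> ->]] //.
      by rewrite filter_uniq ?iota_uniq.
    exact: iota_uniq.
  move=> [i p] [j p'] /hips [hi hP hp] /hips [hj hP' hp'] /= hkey.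
  by case: (hinj _ _ _ _ hi hj hP hP' hp hp' hkey) => /= -> ->.
by move=> k /mapP [ip /hips [hi hP hp] ->]; apply: hU.
Qed.

Section Runs.
Variables (Q : finType) (O : ocs Q).
Implicit Types (g : config Q) (t : trans Q) (s : seq (trans Q)) (p : opath Q).

Definition step g t : config Q := Defs.next t g.
Definition cfgs g s : seq (config Q) := g :: scanl step g s.
Definition dest g s : config Q := foldl step g s.
Definition nzeros_from g s : nat := count (fun x : config Q => x.2 == 0) (cfgs g s).

Lemma dest_cat g s1 s2 : dest g (s1 ++ s2) = dest (dest g s1) s2.
Proof. exact: foldl_cat. Qed.

Lemma last_cfgs g s : last g (cfgs g s) = dest g s.
Proof. by elim: s g => [|t s IH] g //=; rewrite -IH. Qed.

Lemma dest_in_cfgs g s : dest g s \in cfgs g s.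
Proof. by rewrite -last_cfgs /cfgs /= mem_last. Qed.

Lemma ptgtE p : ptgt p = dest (psrc p) (ptr p).
Proof. exact: last_cfgs. Qed.

Lemma nzerosE p : nzeros p = nzeros_from (psrc p) (ptr p).
Proof. by []. Qed.

Lemma valid_from_cat g s1 s2 :
  valid_from O g (s1 ++ s2) = valid_from O g s1 && valid_from O (dest g s1) s2.
Proof. by elim: s1 g => [|t s IH] g //=; rewrite IH andbA. Qed.

Lemma cfgs_cat g s1 s2 : cfgs g (s1 ++ s2) = cfgs g s1 ++ behead (cfgs (dest g s1) s2).
Proof. by rewrite /cfgs scanl_cat. Qed.

Lemma nzeros_from_cat g s1 s2 :
  nzeros_from g (s1 ++ s2) + ((dest g s1).2 == 0) =
  nzeros_from g s1 + nzeros_from (dest g s1) s2.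
Proof. by rewrite /nzeros_from cfgs_cat count_cat /= addnAC addnA. Qed.

Lemma nzeros_from_src g s : (g.2 == 0) <= nzeros_from g s.
Proof. by rewrite /nzeros_from /= leq_addr. Qed.

Lemma dest_in_scanl g s : s != [::] -> dest g s \in scanl step g s.
Proof. by case: s => [|t s] // _; rewrite -last_cfgs /= mem_last. Qed.

Lemma nzeros_from_ends g s : s != [::] ->
  (g.2 == 0) + ((dest g s).2 == 0) <= nzeros_from g s.
Proof.
move=> /(dest_in_scanl g) hin; rewrite /nzeros_from /cfgs [count _ _]/= leq_add2l.
by case: eqP => //= h0; rewrite -has_count; apply/hasP; exists (dest g s) => //; apply/eqP.
Qed.

Lemma nzeros_from_dest g s : ((dest g s).2 == 0) <= nzeros_from g s.
Proof.
case: s => [|t s]; first exact: nzeros_from_src.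
by apply: leq_trans (nzeros_from_ends _ _) => //; apply: leq_addl.
Qed.

Definition positive_run g s : bool :=
  valid_from O g s && all (fun x : config Q => 0 < x.2) (cfgs g s).

Definition shift (d : nat) g : config Q := (g.1, g.2 + d).

Lemma Tpos_teff t : Tpos O t -> (-1 <= teff t <= 1)%R.
Proof. by move/Tpos_eff; rewrite !inE => /or3P [] /eqP ->. Qed.

Lemma positive_run_nil g : positive_run g [::] = (0 < g.2).
Proof. by rewrite /positive_run /= andbT. Qed.

Lemma positive_run_cons g t s :
  positive_run g (t :: s) =
  [&& tsrc t == g.1, Tpos O t, 0 < g.2 & positive_run (step g t) s].
Proof.
rewrite /positive_run /= /firable.
by case: (tsrc t == g.1); case: (Tpos O t); case: (g.2) => [|c]; rewrite /= ?andbF.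
Qed.

Lemma positive_run_cat g s1 s2 :
  positive_run g (s1 ++ s2) = positive_run g s1 && positive_run (dest g s1) s2.
Proof.
elim: s1 g => [|t s IH] g; last by rewrite /= !positive_run_cons IH !andbA.
rewrite positive_run_nil /=; case: s2 => [|t s2]; first by rewrite positive_run_nil andbb.
by rewrite positive_run_cons; case: (0 < g.2); rewrite /= ?andbF.
Qed.

Lemma count_zero_eq0 (l : seq (config Q)) :
  all (fun x : config Q => 0 < x.2) l -> count (fun x : config Q => x.2 == 0) l = 0.
Proof.
move=> /allP hpos; apply/eqP; rewrite -leqn0 leqNgt -has_count.
by apply/hasP => -[x /hpos]; rewrite lt0n => /negbTE ->.
Qed.

Lemma positive_run_nzeros g s : positive_run g s -> nzeros_from g s = 0.
Proof. by case/andP=> _ /count_zero_eq0. Qed.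

Lemma nzeros0_positive_run g s :
  valid_from O g s -> nzeros_from g s = 0 -> positive_run g s.
Proof.
move=> hv /eqP; rewrite -leqn0 leqNgt -has_count => /hasPn hpos.
by rewrite /positive_run hv; apply/allP => x /hpos; rewrite lt0n.
Qed.

Lemma positive_run_valid g s : positive_run g s -> valid_from O g s.
Proof. by case/andP. Qed.

Lemma positive_run_gt0 g s : positive_run g s -> 0 < g.2.
Proof. by case/and3P. Qed.

Lemma nzeros_from_cat_positive_run g s1 s2 :
  positive_run (dest g s1) s2 -> nzeros_from g (s1 ++ s2) = nzeros_from g s1.
Proof.
move=> hrun; have := nzeros_from_cat g s1 s2.
by rewrite (positive_run_nzeros hrun) eqn0Ngt (positive_run_gt0 hrun) !addn0.
Qed.

Lemma nzeros_from_positive_run_cat g s1 s2 :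
  positive_run g s1 -> nzeros_from g (s1 ++ s2) = nzeros_from (dest g s1) s2.
Proof.
move=> hrun; have := nzeros_from_cat g s1 s2; rewrite (positive_run_nzeros hrun).
have : 0 < (dest g s1).2 by case/andP: hrun => _ /allP; apply; apply: dest_in_cfgs.
by rewrite eqn0Ngt => ->; rewrite addn0.
Qed.

Lemma positive_run_Tpos g s : positive_run g s -> all (Tpos O) s.
Proof.
elim: s g => [|t s IH] g //; rewrite positive_run_cons => /and4P [_ ht _ hs].
by rewrite /= ht (IH _ hs).
Qed.

Lemma positive_run_shift d g s : positive_run g s ->
  positive_run (shift d g) s /\ dest (shift d g) s = shift d (dest g s).
Proof.
elim: s g => [|t s IH] g; first by rewrite !positive_run_nil /= => h; split => //; lia.
rewrite !positive_run_cons => /and4P [/eqP hsrc ht hg hs].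
have Estep : step (shift d g) t = shift d (step g t).
  by have := Tpos_teff ht; rewrite /step /Defs.next /shift /= => /andP [? ?]; congr (_, _); lia.
have [IHrun IHdest] := IH _ hs.
by rewrite /= Estep IHrun IHdest hsrc ht eqxx /=; split => //; rewrite /shift /=; lia.
Qed.

Lemma positive_run_eff g s : positive_run g s ->
  Posz (dest g s).2 = (Posz g.2 + seff s)%R.
Proof.
elim: s g => [|t s IH] g; first by rewrite /seff big_nil addr0.
rewrite positive_run_cons => /and4P [_ ht hg hs].
rewrite /= IH // /seff big_cons /step /Defs.next /=.
by have := Tpos_teff ht; rewrite -/(seff s) => /andP [? ?]; lia.
Qed.

Lemma seff_le_size s : all (Tpos O) s -> `|seff s| <= size s.
Proof.
elim: s => [|t s IH] /=; first by rewrite /seff big_nil.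
case/andP=> /Tpos_teff /andP [? ?] /IH; rewrite /seff big_cons -/(seff s); lia.
Qed.

Lemma cycle_seff_le_size s : is_cycle O s -> `|seff s| <= size s.
Proof. by case: s => [|t s] // /and3P [hpos _ _]; apply: seff_le_size. Qed.

Lemma valid_from_consistent g s : valid_from O g s ->
  consistent s /\ base_state s g.1 = g.1.
Proof.
elim: s g => [|t s IH] g //= /andP [/andP [/eqP hsrc _] /IH [hcons hbase]].
split; last by rewrite /base_state /= hsrc.
by case: s hcons hbase {IH} => [|t' s] //= -> <-; rewrite /base_state /= eqxx.
Qed.

Lemma consistent_positive_run s q (c : nat) :
  consistent s -> all (Tpos O) s -> base_state s q = q -> size s < c ->
  positive_run (q, c) s.
Proof.
elim: s q c => [|t s IH] q c; first by move=> _ _ _ hc; rewrite positive_run_nil.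
move=> /= hcons /andP [ht hs] hq hsize; rewrite /base_state /= in hq.
rewrite positive_run_cons hq eqxx ht /=; apply/andP; split; first lia.
have := Tpos_teff ht => /andP [? ?].
apply: IH => //; first by case: s hcons {hs hsize} => [|t' s] // /andP [].
- by case: s hcons {hs hsize} => [|t' s] //= /andP [/eqP].
- by rewrite /step /Defs.next /=; lia.
Qed.

Lemma dest_cons_state g t s : (dest g (t :: s)).1 = ttgt (last t s).
Proof. by elim: s g t => [|t' s IH] g t //=; rewrite IH. Qed.

Lemma simple_cycle_size s : simple_cycle O s -> size s <= n_states Q.
Proof.
case/andP=> _ /card_uniqP; rewrite size_map /n_states => <-; exact: max_card.
Qed.

Lemma simple_cycle_run s q (c : nat) :
  simple_cycle O s -> base_state s q = q -> n_states Q < c ->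
  positive_run (q, c) s /\ dest (q, c) s = (q, `|(c%:Z + seff s)%R|%N).
Proof.
move=> hsimple hq hc; have hsize := simple_cycle_size hsimple.
case/andP: hsimple; case: s hq hsize => [|t s] // hq hsize /and3P [hpos hcons hlast] _.
have hrun : positive_run (q, c) (t :: s).
  by apply: consistent_positive_run => //; apply: leq_ltn_trans hc.
have hstate : (dest (q, c) (t :: s)).1 = q.
  by rewrite dest_cons_state -[RHS]hq; apply/eqP.
split => //; have := positive_run_eff hrun; have := hstate.
by case: (dest (q, c) (t :: s)) => q' c' /= -> hc'; congr (_, _); lia.
Qed.

Lemma cycle_iter_up s g k :
  simple_cycle O s -> base_state s g.1 = g.1 -> n_states Q < g.2 -> (0 < seff s)%R ->
  positive_run g (flatten (nseq k s)) /\
  dest g (flatten (nseq k s)) = shift (k * `|seff s|) g.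
Proof.
case: g => q c /= hsimple hq + hpos; rewrite /shift /=; elim: k c => [|k IH] c hc.
  by rewrite positive_run_nil /= addn0; split => //; lia.
have [hrun hdest] := simple_cycle_run hsimple hq hc.
have E : `|(c%:Z + seff s)%R|%N = c + `|seff s| by lia.
rewrite E in hdest.
have [IHrun IHdest] := IH (c + `|seff s|) ltac:(lia).
rewrite /= positive_run_cat dest_cat hdest hrun IHrun IHdest; split => //.
by congr (_, _); lia.
Qed.

Lemma cycle_iter_down s g k :
  simple_cycle O s -> base_state s g.1 = g.1 -> n_states Q < g.2 -> (seff s < 0)%R ->
  positive_run (shift (k * `|seff s|) g) (flatten (nseq k s)) /\
  dest (shift (k * `|seff s|) g) (flatten (nseq k s)) = g.
Proof.
case: g => q c /= hsimple hq hc hneg; rewrite /shift /=; elim: k => [|k [IHrun IHdest]].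
  by rewrite positive_run_nil /= !addn0; split => //; lia.
have [hrun hdest] := simple_cycle_run (c := c + k.+1 * `|seff s|) hsimple hq ltac:(lia).
have E : `|((c + k.+1 * `|seff s|)%:Z + seff s)%R|%N = c + k * `|seff s| by lia.
rewrite E in hdest.
by rewrite /= positive_run_cat dest_cat hdest hrun IHrun IHdest.
Qed.

Lemma chain_dest (ps : seq (opath Q)) (p0 : opath Q) k :
  chain ps -> k < size ps ->
  dest (psrc (head p0 ps)) (flatten (map (@ptr Q) (take k ps))) = psrc (nth p0 ps k).
Proof.
elim: ps k => [|p ps IH] [|k] //= hchain hk.
rewrite dest_cat -ptgtE; case: ps IH hchain hk => [|p' ps] IH //= /andP [/eqP -> hchain] hk.
exact: IH.
Qed.

Lemma positive_run_repeat g s u v :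
  positive_run g s -> u < v -> v <= size s ->
  (dest g (take u s)).1 = (dest g (take v s)).1 ->
  let c := drop u (take v s) in
  [/\ infix c s, is_cycle O c &
      Posz (dest g (take v s)).2 = (Posz (dest g (take u s)).2 + seff c)%R].
Proof.
move=> hrun huv hv hstate c.
have Ev : take v s = take u s ++ c.
  by rewrite /c -{1}(take_takel s (ltnW huv)) cat_take_drop.
have Es : s = take u s ++ c ++ drop v s by rewrite catA -Ev cat_take_drop.
move: hrun; rewrite {1}Es !positive_run_cat => /and3P [_ hc _].
have hdest : dest (dest g (take u s)) c = dest g (take v s) by rewrite -dest_cat -Ev.
split; first by apply/infixP; exists (take u s), (drop v s).
- have [hcons hbase] := valid_from_consistent (andP hc).1.
  have : c != [::] by rewrite -size_eq0 /c size_drop size_takel //; lia.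
  move: (positive_run_Tpos hc) hdest hcons hbase; rewrite /is_cycle.
  clear Ev Es hc; clearbody c; case: c => [|t c'] // hpos hdest' hcons hbase _.
  rewrite hpos hcons /= -(dest_cons_state (dest g (take u s))) hdest' -hstate.
  by apply/eqP; symmetry; exact: hbase.
- by rewrite -hdest (positive_run_eff hc).
Qed.

Lemma arc_nzeros p : is_arc O p -> nzeros_from (psrc p) (ptr p) <= 2.
Proof.
case/and4P=> _ _ _; rewrite /pinter /nzeros_from /cfgs -/(pafter p).
case/lastP: (pafter p) => [|l x] /=; first by case: (_ == _).
rewrite size_rcons /= -cats1 take_size_cat // count_cat /= => /count_zero_eq0 ->.
by case: (_ == _); case: (_ == _).
Qed.

Lemma nzeros_from_arc_pair p1 M p2 :
  is_arc O p1 -> is_arc O p2 -> ptr p1 != [::] -> ptr p2 != [::] ->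
  dest (ptgt p1) M = psrc p2 ->
  3 <= nzeros_from (psrc p1) (ptr p1 ++ M ++ ptr p2).
Proof.
case/and4P=> _ /eqP hsrc1 /eqP htgt1 _ /and4P [_ _ /eqP htgt2 _] hne1 hne2 hM.
have hne : M ++ ptr p2 != [::] by case: M {hM} => //; rewrite cat0s.
have := nzeros_from_cat (psrc p1) (ptr p1) (M ++ ptr p2).
have := nzeros_from_ends (psrc p1) hne1; have := nzeros_from_ends (dest (psrc p1) (ptr p1)) hne.
rewrite -ptgtE dest_cat hM -ptgtE hsrc1 htgt1 htgt2 /=; lia.
Qed.

Lemma scc_eq (S1 S2 : {set Q}) q :
  is_scc O S1 -> is_scc O S2 -> q \in S1 -> q \in S2 -> S1 = S2.
Proof.
suff sccE S : is_scc O S -> q \in S ->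
    S = [set p | connect (gedge O) q p && connect (gedge O) p q].
  by move=> h1 h2 q1 q2; rewrite (sccE _ h1 q1) (sccE _ h2 q2).
move=> [r ->]; rewrite inE => /andP [hrq hqr].
apply/setP => p; rewrite !inE; apply/idP/idP => /andP [h1 h2]; apply/andP; split.
- exact: connect_trans hqr h1.
- exact: connect_trans h2 hrq.
- exact: connect_trans hrq h1.
- exact: connect_trans h2 hqr.
Qed.

End Runs.

Lemma sigma_ok_Aof_gt0 (Q : finType) (O : ocs Q) sigp sigm (S : {set Q}) :
  sigma_ok O sigp sigm -> is_scc O S -> pos_enabled O S -> 0 < Aof sigp S.
Proof. by move=> Hsig hS hpos; case/and3P: (Hsig.1 S hS hpos) => _ h _; rewrite /Aof; lia. Qed.

Lemma sigma_ok_Bof_gt0 (Q : finType) (O : ocs Q) sigp sigm (T : {set Q}) :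
  sigma_ok O sigp sigm -> is_scc O T -> neg_enabled O T -> 0 < Bof sigm T.
Proof. by move=> Hsig hT hneg; case/and3P: (Hsig.2 T hT hneg) => _ h _; rewrite /Bof; lia. Qed.

Section NormalArc.
Variables (Q : finType) (O : ocs Q) (sigp sigm : {set Q} -> seq (trans Q)).
Variables (S T : {set Q}) (r pref up cap down suff : opath Q) (a b : nat).
Hypothesis Hsig : sigma_ok O sigp sigm.
Hypothesis Hnormal : normal_decomp O sigp sigm S T r pref up cap down suff a b.
Hypothesis Hgood : good_decomp O sigp sigm S T pref up cap down suff a b.

Lemma normal_sigp :
  [&& simple_cycle O (sigp S), (0 < seff (sigp S))%R & contained S (sigp S)].
Proof. by case: Hnormal => -[hS _ hpos _] _; apply: Hsig.1. Qed.

Lemma normal_sigm :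
  [&& simple_cycle O (sigm T), (seff (sigm T) < 0)%R & contained T (sigm T)].
Proof. by case: Hnormal => -[_ hT _ hneg] _; apply: Hsig.2. Qed.

Lemma normal_cap_src_base : base_state (sigp S) (psrc cap).1 = (psrc cap).1.
Proof. by case: Hnormal => _ [_ [_ [h _]]]; rewrite -h. Qed.

Lemma normal_cap_tgt_base : base_state (sigm T) (ptgt cap).1 = (ptgt cap).1.
Proof. by case: Hnormal => _ [_ [_ [_ h]]]; rewrite -h. Qed.

Lemma normal_cap_src_high : n_states Q < (psrc cap).2.
Proof.
case: Hnormal => _ [[_ /and3P [/and5P [_ /eqP <- _ _ _] _ _]] _].
by case: Hgood => _ _ _ [].
Qed.

Lemma normal_cap_tgt_high : n_states Q < (ptgt cap).2.
Proof.
case: Hnormal => _ [[_ /and3P [/and5P [_ _ /eqP -> _ _] _ _]] _].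
by case: Hgood => _ _ _ [].
Qed.

Lemma normal_ptr : ptr r = (ptr pref ++ ptr up) ++ ptr cap ++ (ptr down ++ ptr suff).
Proof.
case: Hnormal => _ [[_ /and3P [_ _ /eqP ->]] _].
by rewrite /= !cats0 !catA.
Qed.

Lemma normal_cap_src : psrc cap = dest (psrc r) (ptr pref ++ ptr up).
Proof.
case: Hnormal => _ [[_ /and3P [/and5P [/eqP h1 /eqP h2 _ _ _] /eqP h0 _]] _].
by rewrite -h2 ptgtE -h1 ptgtE -h0 dest_cat.
Qed.

Lemma normal_cap_tgt : dest (ptgt cap) (ptr down ++ ptr suff) = ptgt r.
Proof.
by rewrite [ptgt r]ptgtE normal_ptr [RHS]dest_cat -normal_cap_src [RHS]dest_cat -ptgtE.
Qed.

Lemma normal_arc : is_arc O r.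
Proof. by case: Hnormal => _ [[]]. Qed.

Lemma normal_ptr_neq0 : ptr r != [::].
Proof.
have := normal_cap_src_high; rewrite normal_cap_src normal_ptr.
case/and4P: normal_arc => _ /eqP h0 _ _.
by case: (ptr pref ++ ptr up) => [|t s] //=; rewrite h0.
Qed.

Lemma normal_runs :
  [/\ valid_from O (psrc r) (ptr pref ++ ptr up) /\
        nzeros_from (psrc r) (ptr pref ++ ptr up) <= 1,
      positive_run O (psrc cap) (ptr cap) &
      valid_from O (ptgt cap) (ptr down ++ ptr suff) /\
        nzeros_from (ptgt cap) (ptr down ++ ptr suff) <= 1].
Proof.
set H := ptr pref ++ ptr up; set C := ptr cap; set Tl := ptr down ++ ptr suff.
have hz : nzeros_from (psrc r) (H ++ C ++ Tl) <= 2.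
  by rewrite -normal_ptr; exact: arc_nzeros normal_arc.
case/and4P: normal_arc => hval /eqP hsrc0 /eqP htgt0 _.
have ecap : dest (psrc r) H = psrc cap by rewrite normal_cap_src.
have etgt : dest (psrc cap) C = ptgt cap by rewrite ptgtE.
move: hval; rewrite /pvalid normal_ptr -/H -/C -/Tl.
rewrite valid_from_cat ecap valid_from_cat etgt => /and3P [hvH hvC hvT].
have z1 := nzeros_from_cat (psrc r) H (C ++ Tl).
have z2 := nzeros_from_cat (psrc cap) C Tl.
have z3 := nzeros_from_src (psrc r) H.
have z4 := nzeros_from_dest (ptgt cap) Tl.
rewrite ecap in z1; rewrite etgt in z2; rewrite hsrc0 /= in z3.
rewrite normal_cap_tgt htgt0 /= in z4.
have n1 := normal_cap_src_high; have n2 := normal_cap_tgt_high.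
have e1 : ((psrc cap).2 == 0) = false by apply/negbTE; rewrite -lt0n; lia.
have e2 : ((ptgt cap).2 == 0) = false by apply/negbTE; rewrite -lt0n; lia.
rewrite e1 addn0 in z1; rewrite e2 addn0 in z2.
split; [split=> //; lia | apply: nzeros0_positive_run => //; lia | split=> //; lia].
Qed.

End NormalArc.

Section StandingSetup.
Variables (Q : finType) (O : ocs Q) (sigp sigm : {set Q} -> seq (trans Q)).
Hypothesis Hsig : sigma_ok O sigp sigm.
Variables (alpha beta : config Q) (rho : opath Q).
Hypothesis Hrho : pvalid O rho /\ psrc rho = alpha /\ ptgt rho = beta.
Hypothesis Hmin : forall p', pvalid O p' -> psrc p' = alpha -> ptgt p' = beta ->
  nzeros rho <= nzeros p'.
Variables (rhos : seq (opath Q)) (isN : nat -> bool) (Sof Tof : nat -> {set Q}).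
Hypothesis Hdec : decomp rho rhos.
Variables (a b : nat -> nat) (pref up cap down suff : nat -> opath Q).
Hypothesis HN : forall i, i < size rhos -> isN i ->
  normal_decomp O sigp sigm (Sof i) (Tof i) (nth rho rhos i)
    (pref i) (up i) (cap i) (down i) (suff i) (a i) (b i) /\
  good_decomp O sigp sigm (Sof i) (Tof i)
    (pref i) (up i) (cap i) (down i) (suff i) (a i) (b i).

Local Notation arc i := (nth rho rhos i).

Definition cap_cfg i p : config Q := dest (psrc (cap i)) (take p (ptr (cap i))).

Lemma no_zero_shortcut F1 W W' F2 :
  ptr rho = F1 ++ W ++ F2 ->
  valid_from O (dest alpha F1) W' ->
  dest (dest alpha F1) W' = dest (dest alpha F1) W ->
  nzeros_from (dest alpha F1) W' < nzeros_from (dest alpha F1) W -> False.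
Proof.
case: Hrho => hval [hsrc htgt] hptr hvalW' hdestW' hlt.
move: hval htgt; rewrite /pvalid ptgtE hsrc hptr !valid_from_cat !dest_cat.
case/and3P=> hv1 _ hv3 htgt.
have := Hmin (p' := OPath alpha (F1 ++ W' ++ F2)).
rewrite /pvalid ptgtE /= !valid_from_cat !dest_cat hdestW' hv1 hvalW' hv3 htgt.
move=> /(_ isT erefl erefl); rewrite !nzerosE hsrc hptr /=.
have := nzeros_from_cat alpha F1 (W ++ F2); have := nzeros_from_cat alpha F1 (W' ++ F2).
have := nzeros_from_cat (dest alpha F1) W F2.
have := nzeros_from_cat (dest alpha F1) W' F2.
rewrite hdestW'; lia.
Qed.

Lemma arc_pair_split i j : i < j -> j < size rhos ->
  exists F1 M F2, [/\ ptr rho = F1 ++ (ptr (arc i) ++ M ++ ptr (arc j)) ++ F2,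
    dest alpha F1 = psrc (arc i) & dest (ptgt (arc i)) M = psrc (arc j)].
Proof.
move=> hij hj; case/and3P: Hdec => hchain /eqP hhead /eqP hptr.
have hsrc : psrc (head rho rhos) = alpha by rewrite hhead; case: Hrho => _ [].
have Etake := take_nth_split rho hij (ltnW hj).
have e1 : dest alpha (flatten (map (@ptr Q) (take i rhos))) = psrc (arc i).
  by rewrite -hsrc chain_dest //; apply: ltn_trans hj.
exists (flatten (map (@ptr Q) (take i rhos))),
  (flatten (map (@ptr Q) (drop i.+1 (take j rhos)))),
  (flatten (map (@ptr Q) (drop j.+1 rhos))).
split => //.
  have Erhos : rhos = take i rhos ++ arc i :: drop i.+1 (take j rhos) ++ arc j :: drop j.+1 rhos.
    by rewrite -{1}(cat_take_drop j rhos) (drop_nth rho hj) {1}Etake -catA.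
  by rewrite hptr {1}Erhos map_cat flatten_cat /= map_cat flatten_cat /= !catA.
have := chain_dest rho hchain hj; rewrite hsrc {1}Etake map_cat flatten_cat /=.
by rewrite !dest_cat e1 -ptgtE.
Qed.

Lemma pumped_head i p k : i < size rhos -> isN i -> p <= plen (cap i) ->
  exists2 X, valid_from O (psrc (arc i)) X /\ nzeros_from (psrc (arc i)) X <= 1 &
    dest (psrc (arc i)) X = shift (k * Aof sigp (Sof i)) (cap_cfg i p).
Proof.
move=> hi hNi hp; have [hnd hgd] := HN hi hNi.
have [[hvH hzH] hcap _] := normal_runs hnd hgd.
case/and3P: (normal_sigp Hsig hnd) => hsimple hpos _.
have [hrunP hdestP] := cycle_iter_up k hsimple (normal_cap_src_base hnd)
  (normal_cap_src_high hnd hgd) hpos.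
move: hcap; rewrite -(cat_take_drop p (ptr (cap i))) positive_run_cat => /andP [hrunT _].
have [hrunT' hdestT'] := positive_run_shift (k * Aof sigp (Sof i)) hrunT.
exists ((ptr (pref i) ++ ptr (up i)) ++ flatten (nseq k (sigp (Sof i))) ++ take p (ptr (cap i))).
  have hrun : positive_run O (dest (psrc (arc i)) (ptr (pref i) ++ ptr (up i)))
      (flatten (nseq k (sigp (Sof i))) ++ take p (ptr (cap i))).
    by rewrite -(normal_cap_src hnd) positive_run_cat hrunP hdestP hrunT'.
  by rewrite valid_from_cat hvH (positive_run_valid hrun) (nzeros_from_cat_positive_run hrun).
by rewrite dest_cat -(normal_cap_src hnd) dest_cat hdestP hdestT'.
Qed.

Lemma pumped_tail j p l : j < size rhos -> isN j -> p <= plen (cap j) ->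
  exists2 Y, valid_from O (shift (l * Bof sigm (Tof j)) (cap_cfg j p)) Y /\
      nzeros_from (shift (l * Bof sigm (Tof j)) (cap_cfg j p)) Y <= 1 &
    dest (shift (l * Bof sigm (Tof j)) (cap_cfg j p)) Y = ptgt (arc j).
Proof.
move=> hj hNj hp; have [hnd hgd] := HN hj hNj.
have [_ hcap [hvT hzT]] := normal_runs hnd hgd.
case/and3P: (normal_sigm Hsig hnd) => hsimple hneg _.
have [hrunP hdestP] := cycle_iter_down l hsimple (normal_cap_tgt_base hnd)
  (normal_cap_tgt_high hnd hgd) hneg.
rewrite -abszN -/(Bof sigm (Tof j)) in hrunP hdestP.
have Ecap : dest (cap_cfg j p) (drop p (ptr (cap j))) = ptgt (cap j).
  by rewrite -dest_cat cat_take_drop ptgtE.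
move: hcap; rewrite -(cat_take_drop p (ptr (cap j))) positive_run_cat => /andP [_ hrunD].
have [hrunD' hdestD'] := positive_run_shift (l * Bof sigm (Tof j)) hrunD.
rewrite -/(cap_cfg j p) Ecap in hrunD' hdestD'.
exists ((drop p (ptr (cap j)) ++ flatten (nseq l (sigm (Tof j)))) ++ ptr (down j) ++ ptr (suff j)).
  have hrun : positive_run O (shift (l * Bof sigm (Tof j)) (cap_cfg j p))
      (drop p (ptr (cap j)) ++ flatten (nseq l (sigm (Tof j)))).
    by rewrite positive_run_cat hrunD' hdestD' hrunP.
  rewrite valid_from_cat (positive_run_valid hrun) (nzeros_from_positive_run_cat _ hrun).
  by rewrite dest_cat hdestD' hdestP hvT hzT.
by rewrite dest_cat (dest_cat _ (drop _ _)) hdestD' hdestP (normal_cap_tgt hnd).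
Qed.

Lemma no_repeat_across i j p p' k l :
  i < j -> j < size rhos -> isN i -> isN j -> p <= plen (cap i) -> p' <= plen (cap j) ->
  (cap_cfg i p).1 = (cap_cfg j p').1 ->
  (cap_cfg i p).2 + k * Aof sigp (Sof i) = (cap_cfg j p').2 + l * Bof sigm (Tof j) ->
  False.
Proof.
move=> hij hj hNi hNj hp hp' hstate hcounter; have hi := ltn_trans hij hj.
have [hndi hgdi] := HN hi hNi; have [hndj hgdj] := HN hj hNj.
have [X [hvX hzX] hdX] := pumped_head k hi hNi hp.
have [Y [hvY hzY] hdY] := pumped_tail l hj hNj hp'.
have Emeet : shift (k * Aof sigp (Sof i)) (cap_cfg i p) =
             shift (l * Bof sigm (Tof j)) (cap_cfg j p').
  by rewrite /shift hstate hcounter.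
have [F1 [M [F2 [hptr e1 eM]]]] := arc_pair_split hij hj.
apply: (no_zero_shortcut (W' := X ++ Y) hptr); rewrite e1.
- by rewrite valid_from_cat hvX hdX Emeet.
- by rewrite dest_cat hdX Emeet hdY dest_cat -ptgtE dest_cat eM -ptgtE.
have := nzeros_from_cat (psrc (arc i)) X Y; rewrite hdX Emeet.
have := nzeros_from_arc_pair (normal_arc hndi) (normal_arc hndj)
  (normal_ptr_neq0 hndi hgdi) (normal_ptr_neq0 hndj hgdj) eM.
lia.
Qed.

Lemma no_repeat_within i p p' (M : nat) :
  i < size rhos -> isN i -> p < p' -> p' <= plen (cap i) ->
  gcdn (Aof sigp (Sof i)) (Bof sigm (Tof i)) %| M ->
  (cap_cfg i p).1 = (cap_cfg i p').1 -> (cap_cfg i p).2 = (cap_cfg i p').2 %[mod M] ->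
  False.
Proof.
move=> hi hNi hpp hp' hM hstate hmod; have [hnd hgd] := HN hi hNi.
have [_ hcap _] := normal_runs hnd hgd.
have [hinfix hcycle heff] := positive_run_repeat hcap hpp hp' hstate.
case: hgd => _ _ hnodiv _ _; have /negP := hnodiv _ hinfix hcycle; apply.
exact: dvdn_trans hM (dvdn_absz_diff heff hmod).
Qed.

Definition cycle_congruent i j (x y : nat) : Prop :=
  (Sof i = Sof j /\ x = y %[mod Aof sigp (Sof i)]) \/
  (Tof i = Tof j /\ x = y %[mod Bof sigm (Tof i)]).

Lemma cycle_congruent_sym i j x y : cycle_congruent i j x y -> cycle_congruent j i y x.
Proof. by case=> -[e hmod]; [left | right]; rewrite -e. Qed.

Lemma cap_cfg_inj i j p p' :
  i < size rhos -> j < size rhos -> isN i -> isN j ->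
  p <= plen (cap i) -> p' <= plen (cap j) ->
  (cap_cfg i p).1 = (cap_cfg j p').1 ->
  cycle_congruent i j (cap_cfg i p).2 (cap_cfg j p').2 -> i = j /\ p = p'.
Proof.
wlog hij : i j p p' / i <= j.
  move=> hwlog hi hj hNi hNj hp hp' hstate hcong.
  case: (leqP i j) => [hij | /ltnW hji]; first exact: hwlog.
  have := cycle_congruent_sym hcong.
  by case/(hwlog j i p' p hji hj hi hNj hNi hp' hp (esym hstate)) => -> ->.
move=> hi hj hNi hNj hp hp' hstate hcong.
case: ltngtP hij => // [hlt _ | eij _]; last first.
  subst j; split => //.
  have hwithin u v : u < v -> v <= plen (cap i) -> (cap_cfg i u).1 = (cap_cfg i v).1 ->
      cycle_congruent i i (cap_cfg i u).2 (cap_cfg i v).2 -> False.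
    move=> huv hv hst [[_ hmod] | [_ hmod]].
      exact: no_repeat_within hi hNi huv hv (dvdn_gcdl _ _) hst hmod.
    exact: no_repeat_within hi hNi huv hv (dvdn_gcdr _ _) hst hmod.
  case: (ltngtP p p') => // hpp; first by case: (hwithin p p').
  by case: (hwithin p' p) => //; apply: cycle_congruent_sym.
have [[[hSi _ hposi _] _] _] := HN hi hNi; have [[[_ hTj _ hnegj] _] _] := HN hj hNj.
have hA := sigma_ok_Aof_gt0 Hsig hSi hposi; have hB := sigma_ok_Bof_gt0 Hsig hTj hnegj.
have [k [l hkl]] : exists k l, (cap_cfg i p).2 + k * Aof sigp (Sof i) =
                              (cap_cfg j p').2 + l * Bof sigm (Tof j).
  case: hcong => [[_ hmod] | [eT hmod]]; first exact: modn_add_mul_meet.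
  rewrite eT in hmod; have [l [k hlk]] := modn_add_mul_meet hB hA (esym hmod).
  by exists k, l.
by case: (no_repeat_across hlt hj hNi hNj hp hp' hstate hkl).
Qed.

Lemma sum_cap_len_leq (P : pred nat) (K : eqType) (key : nat -> nat -> K) (U : seq K) :
  (forall i, P i -> isN i) ->
  (forall i j p p', i < size rhos -> j < size rhos -> P i -> P j ->
     p <= plen (cap i) -> p' <= plen (cap j) -> key i p = key j p' ->
     (cap_cfg i p).1 = (cap_cfg j p').1 /\
     cycle_congruent i j (cap_cfg i p).2 (cap_cfg j p').2) ->
  (forall i p, i < size rhos -> P i -> p <= plen (cap i) -> key i p \in U) ->
  \sum_(i < size rhos | P i) plen (cap i) <= size U.
Proof.
move=> hPN hkey hU; apply: leq_trans (sum_succ_leq_injective_keys _ hU).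
  by apply: leq_sum => i _.
move=> i j p p' hi hj hPi hPj hp hp' /(hkey _ _ _ _ hi hj hPi hPj hp hp') [hstate hcong].
exact: cap_cfg_inj (hPN _ hPi) (hPN _ hPj) hp hp' hstate hcong.
Qed.

Lemma sum_cap_len_from (S : {set Q}) : is_scc O S -> pos_enabled O S ->
  \sum_(i < size rhos | isN i && (Sof i == S)) plen (cap i) <= Aof sigp S * n_states Q.
Proof.
move=> hS hpos; have hA := sigma_ok_Aof_gt0 Hsig hS hpos.
rewrite mulnC /n_states cardE -(size_iota 0 (Aof sigp S)) -(size_allpairs pair).
apply: (sum_cap_len_leq (P := fun i => isN i && (Sof i == S))
  (key := fun i p => ((cap_cfg i p).1, (cap_cfg i p).2 %% Aof sigp S))).
- by move=> i /andP [].
- move=> i j p p' _ _ /andP [_ /eqP eSi] /andP [_ /eqP eSj] _ _ [hstate hmod].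
  by split=> //; left; rewrite eSi eSj.
- move=> i p _ _ _; apply/allpairsP; exists ((cap_cfg i p).1, (cap_cfg i p).2 %% Aof sigp S).
  by rewrite mem_enum mem_iota ltn_pmod.
Qed.

Lemma sum_cap_len_to (T : {set Q}) : is_scc O T -> neg_enabled O T ->
  \sum_(i < size rhos | isN i && (Tof i == T)) plen (cap i) <= n_states Q * Bof sigm T.
Proof.
move=> hT hneg; have hB := sigma_ok_Bof_gt0 Hsig hT hneg.
rewrite /n_states cardE -(size_iota 0 (Bof sigm T)) -(size_allpairs pair).
apply: (sum_cap_len_leq (P := fun i => isN i && (Tof i == T))
  (key := fun i p => ((cap_cfg i p).1, (cap_cfg i p).2 %% Bof sigm T))).
- by move=> i /andP [].
- move=> i j p p' _ _ /andP [_ /eqP eTi] /andP [_ /eqP eTj] _ _ [hstate hmod].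
  by split=> //; right; rewrite eTi eTj.
- move=> i p _ _ _; apply/allpairsP; exists ((cap_cfg i p).1, (cap_cfg i p).2 %% Bof sigm T).
  by rewrite mem_enum mem_iota ltn_pmod.
Qed.

Lemma sum_cap_len_total : \sum_(i < size rhos | isN i) plen (cap i) <= n_states Q ^ 2.
Proof.
(* The counter modulo A read as a position on sigma+_S: the state found there
   lies in S, so it determines S as well as the residue. *)
pose w i p := nth (cap_cfg i p).1 (cycle_states (sigp (Sof i)))
                  ((cap_cfg i p).2 %% Aof sigp (Sof i)).
have hw i p : i < size rhos -> isN i ->
    [/\ is_scc O (Sof i), w i p \in Sof i, uniq (cycle_states (sigp (Sof i))) &
        (cap_cfg i p).2 %% Aof sigp (Sof i) < size (cycle_states (sigp (Sof i)))].
  move=> hi hNi; have [hnd _] := HN hi hNi; have [[hS _ hpos _] _] := hnd.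
  case/and3P: (normal_sigp Hsig hnd) => /andP [hcycle huniq] _ hcont.
  have hlt : (cap_cfg i p).2 %% Aof sigp (Sof i) < size (cycle_states (sigp (Sof i))).
    rewrite size_map; apply: leq_trans (cycle_seff_le_size hcycle).
    exact: ltn_pmod (sigma_ok_Aof_gt0 Hsig hS hpos).
  by split=> //; apply: (allP hcont); apply: mem_nth.
rewrite /n_states cardE -mulnn -(size_allpairs pair).
apply: (sum_cap_len_leq (P := isN) (key := fun i p => ((cap_cfg i p).1, w i p))) => //.
  move=> i j p p' hi hj hNi hNj _ _ [hstate hwij].
  have [hSi wi ui lti] := hw i p hi hNi; have [hSj wj _ ltj] := hw j p' hj hNj.
  have eS : Sof i = Sof j by apply: (scc_eq hSi hSj wi); rewrite hwij.
  split=> //; left; split=> //; apply/eqP.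
  move: hwij; rewrite /w hstate -eS in ltj * => /eqP.
  by rewrite nth_uniq.
move=> i p _ _ _; apply/allpairsP; exists ((cap_cfg i p).1, w i p).
by rewrite !mem_enum.
Qed.

End StandingSetup.

Theorem lemma6 (Q : finType) (O : ocs Q)
    (sigp sigm : {set Q} -> seq (trans Q))
    (Hsig : sigma_ok O sigp sigm)
    (alpha beta : config Q) (Halpha : alpha.2 = 0%N) (Hbeta : beta.2 = 0%N)
    (rho : opath Q)
    (Hrho : pvalid O rho /\ psrc rho = alpha /\ ptgt rho = beta)
    (Hmin : forall p', pvalid O p' -> psrc p' = alpha -> ptgt p' = beta ->
              (nzeros rho <= nzeros p')%N)
    (rhos : seq (opath Q)) (Hdec : decomp rho rhos)
    (Harcs : forall i, (i < size rhos)%N -> is_arc O (nth rho rhos i))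
    (isN : nat -> bool)
    (HL : forall i, (i < size rhos)%N -> ~~ isN i -> min_low_arc O (nth rho rhos i))
    (Sof Tof : nat -> {set Q}) (a b : nat -> nat)
    (pref up cap down suff : nat -> opath Q)
    (HN : forall i, (i < size rhos)%N -> isN i ->
       normal_decomp O sigp sigm (Sof i) (Tof i) (nth rho rhos i)
         (pref i) (up i) (cap i) (down i) (suff i) (a i) (b i) /\
       good_decomp O sigp sigm (Sof i) (Tof i)
         (pref i) (up i) (cap i) (down i) (suff i) (a i) (b i))
    (S T : {set Q}) (HS : is_scc O S) (HSp : pos_enabled O S)
    (HT : is_scc O T) (HTn : neg_enabled O T) :
  (\sum_(i < size rhos | isN i && (Sof i == S)) plen (cap i)
      <= Aof sigp S * n_states Q)%N /\
  (\sum_(i < size rhos | isN i && (Tof i == T)) plen (cap i)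
      <= n_states Q * Bof sigm T)%N /\
  (\sum_(i < size rhos | isN i) plen (cap i) <= n_states Q ^ 2)%N.
Proof.
split; last split.
- exact: (sum_cap_len_from Hsig Hrho Hmin Hdec HN HS HSp).
- exact: (sum_cap_len_to Hsig Hrho Hmin Hdec HN HT HTn).
- exact: (sum_cap_len_total Hsig Hrho Hmin Hdec HN).
Qed.
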